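(* Let $N\ge1$, $K>0$, $r_i>0$, let $(\mu_{ij})$ be a nonnegative, symmetric, irreducible $N\times N$ matrix, and let $\alpha:\mathbb{R}^N\to\mathbb{R}$ be locally Lipschitz with $\alpha(0)=0$, monotone increasing for the componentwise order, and such that there exist positive $R,k,c$ with $c(\sum_jv_j)^k\le\alpha(v)$ for all $v\in[0,\infty)^N$ with $\sum_j|v_j|\ge R$. If $v\in[0,\infty)^N$ is a nonnegative stationary solution of $$\frac{dv_i}{dt}=v_i\left[r_i-\frac{1}{K}\alpha(v)\right]+\sum_{j=1}^N\mu_{ij}(v_j-v_i),\qquad i=1,\dots,N,$$ then either $v\equiv0$ or $v_i>0$ for all $i$.
   Context: A stationary solution is a vector at which the right-hand side vanishes for every $i$. *)

From HB Require Import structures.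
From mathcomp Require Import all_boot all_order all_algebra.
From mathcomp Require Import all_classical all_reals.
From mathcomp Require Import exp.
Set Implicit Arguments. Unset Strict Implicit. Unset Printing Implicit Defensive.
Import Order.TTheory GRing.Theory Num.Theory.
Local Open Scope ring_scope.

(* Irreducibility of a square matrix (combinatorial definition): there is no
   proper nonempty index set S that is "closed", i.e. every index set S with
   S <> empty, S <> all has some i in S, j not in S with mu i j <> 0.
   (Equivalently: mu is not permutation-similar to a block triangular matrix.) *)
Definition irreducible_mx (R : numDomainType) (N : nat) (mu : 'M[R]_N) : Prop :=
  forall S : {set 'I_N}, S != finset.set0 -> S != [set: 'I_N] ->
    exists i, exists j, [/\ i \in S, j \notin S & mu i j != 0].

Definition locally_lipschitz (R : realType) (N : nat) (f : ('I_N -> R) -> R) : Prop :=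
  forall x : 'I_N -> R, exists delta : R, exists L : R,
    0 < delta /\
    forall y z : 'I_N -> R,
      \sum_j `|y j - x j| < delta -> \sum_j `|z j - x j| < delta ->
      `|f y - f z| <= L * \sum_j `|y j - z j|.

Definition rhs (R : realType) (N : nat) (K : R) (r : 'I_N -> R) (mu : 'M[R]_N)
  (alpha : ('I_N -> R) -> R) (v : 'I_N -> R) (i : 'I_N) : R :=
  v i * (r i - alpha v / K) + \sum_j mu i j * (v j - v i).

Definition stationary (R : realType) (N : nat) (K : R) (r : 'I_N -> R) (mu : 'M[R]_N)
  (alpha : ('I_N -> R) -> R) (v : 'I_N -> R) : Prop :=
  forall i, rhs K r mu alpha v i = 0.

From HB Require Import structures.
From mathcomp Require Import all_boot all_order all_algebra.
From mathcomp Require Import all_classical all_reals.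
From mathcomp Require Import exp.
Set Implicit Arguments. Unset Strict Implicit. Unset Printing Implicit Defensive.
Import Order.TTheory GRing.Theory Num.Theory.
Local Open Scope ring_scope.

(* At a zero component v_i = 0 of a stationary solution the reaction term
   vanishes, so 0 = sum_j mu_ij v_j, a sum of nonnegative terms; hence zeros of
   v propagate along the edges of mu, and by irreducibility the zero set of v is
   empty or everything. *)

Lemma irreducible_mx_closed_set (R : numDomainType) (N : nat) (mu : 'M[R]_N)
    (S : {set 'I_N}) :
  irreducible_mx mu ->
  (forall i j, i \in S -> mu i j != 0 -> j \in S) ->
  S = finset.set0 \/ S = [set: 'I_N].
Proof.
move=> mu_irr S_closed.
have [S0|S0] := eqVneq S finset.set0; first by left.
have [ST|ST] := eqVneq S [set: 'I_N]; first by right.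
have [i [j [iS /negP jS mij]]] := mu_irr S S0 ST.
by case: jS; exact: S_closed iS mij.
Qed.

Lemma rhs_at_zero (R : realType) (N : nat) (K : R) (r : 'I_N -> R)
    (mu : 'M[R]_N) (alpha : ('I_N -> R) -> R) (v : 'I_N -> R) (i : 'I_N) :
  v i = 0 -> rhs K r mu alpha v i = \sum_j mu i j * v j.
Proof.
by move=> vi; rewrite /rhs vi mul0r add0r; apply: eq_bigr => j _; rewrite subr0.
Qed.

Lemma stationary_zero_propagates (R : realType) (N : nat) (K : R)
    (r : 'I_N -> R) (mu : 'M[R]_N) (alpha : ('I_N -> R) -> R) (v : 'I_N -> R)
    (i j : 'I_N) :
  (forall i j, 0 <= mu i j) -> (forall i, 0 <= v i) ->
  stationary K r mu alpha v -> v i = 0 -> mu i j != 0 -> v j = 0.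
Proof.
move=> mu_ge0 v_ge0 v_stat vi mij.
have coupling0 : \sum_k mu i k * v k = 0 by rewrite -(rhs_at_zero K r mu alpha vi).
have /eqP : mu i j * v j = 0.
  by apply: (psumr_eq0P _ coupling0) => // k _; rewrite mulr_ge0.
by rewrite mulf_eq0 (negPf mij) => /eqP.
Qed.

Theorem lemma4p2 (R : realType) (N : nat) (hN : (1 <= N)%N)
  (K : R) (r : 'I_N -> R) (mu : 'M[R]_N) (alpha : ('I_N -> R) -> R)
  (hK : 0 < K) (hr : forall i, 0 < r i)
  (hmu_nonneg : forall i j, 0 <= mu i j)
  (hmu_sym : mu^T = mu)
  (hmu_irr : irreducible_mx mu)
  (halpha_lip : locally_lipschitz alpha)
  (halpha0 : alpha (fun _ => 0) = 0)
  (halpha_mono : forall u w : 'I_N -> R, (forall j, u j <= w j) -> alpha u <= alpha w)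
  (halpha_growth : exists Rb k c : R, [/\ 0 < Rb, 0 < k, 0 < c &
      forall u : 'I_N -> R, (forall j, 0 <= u j) -> Rb <= \sum_j `|u j| ->
        c * (\sum_j u j) `^ k <= alpha u])
  (v : 'I_N -> R) (hv_nonneg : forall i, 0 <= v i)
  (hv_stat : stationary K r mu alpha v) :
  (forall i, v i = 0) \/ (forall i, 0 < v i).
Proof.
set Z := [set i | v i == 0].
have Z_closed : forall i j, i \in Z -> mu i j != 0 -> j \in Z.
  move=> i j; rewrite !inE => /eqP vi mij.
  by rewrite (stationary_zero_propagates hmu_nonneg hv_nonneg hv_stat vi mij).
case: (irreducible_mx_closed_set hmu_irr Z_closed) => [Z0|ZT].
- right=> i; rewrite lt_neqAle hv_nonneg andbT eq_sym.
  by apply: contra_eqN Z0 => vi; apply/set0Pn; exists i; rewrite inE.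
- left=> i; apply/eqP; have : i \in Z by rewrite ZT inE.
  by rewrite inE.
Qed.
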